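(* Let $(G,G^+)$ be a simple Riesz group, and let $I=(q_i)_{i\ge1}$ be an increasing sequence of non-negative integers with $\gcd(q_i,q_j)=1$ for all $i\neq j$. Suppose that for every $i$ there is a countably generated interval $D_i$ in $G^+$ with $tD_i\neq G^+$ for every positive integer $t\le q_i-1$ and $q_iD_i=G^+$. Then there exists a sequence $(X_i)_{i\ge1}$ of countably generated intervals in $G^+$, descending in the algebraic ordering of the monoid of countably generated intervals (i.e. for each $i$ there is a countably generated interval $Y_i$ with $X_{i+1}+Y_i=X_i$), such that $tX_i\neq G^+$ for every positive integer $t\le q_i-1$ and $\left(\prod_{j=1}^i q_j\right)X_i=G^+$.
   Context: $(G,G^+)$ partially ordered abelian group; simple: $G\neq0$ and every nonzero element of $G^+$ is an order-unit. Riesz group: $x\le y_1+y_2$ in $G^+$ implies $x=x_1+x_2$ with $x_j\in G^+$, $x_j\le y_j$. An interval in $G^+$ is a nonempty, upward directed, order-hereditary subset of $G^+$; countably generated if it has a countable cofinal subset. Intervals form a monoid with $X+Y=\{z\in G^+: z\le x+y,\ x\in X,\ y\in Y\}$; $tX$ is the $t$-fold sum. *)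

From HB Require Import structures.
From mathcomp Require Import all_boot all_algebra.
From mathcomp Require Import boolp classical_sets.
Set Implicit Arguments. Unset Strict Implicit. Unset Printing Implicit Defensive.
Import GRing.Theory.
Local Open Scope ring_scope.
Local Open Scope classical_set_scope.

Section PO.
Variable G : zmodType.
Variable Gp : set G.

Definition po_group : Prop :=
  [/\ Gp 0, (forall x y, Gp x -> Gp y -> Gp (x + y))
    & (forall x, Gp x -> Gp (- x) -> x = 0)].

Definition ple (x y : G) : Prop := Gp (y - x).

Definition order_unit (u : G) : Prop :=
  Gp u /\ forall x : G, exists n : nat, ple x (u *+ n).

Definition simple_po : Prop :=
  (exists x : G, x <> 0) /\ (forall u, Gp u -> u <> 0 -> order_unit u).

Definition riesz : Prop :=
  forall x y1 y2, Gp x -> Gp y1 -> Gp y2 -> ple x (y1 + y2) ->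
    exists x1 x2, [/\ Gp x1, Gp x2, x = x1 + x2, ple x1 y1 & ple x2 y2].

Definition interval (X : set G) : Prop :=
  [/\ X `<=` Gp, (exists x, X x),
      (forall x y, X x -> X y -> exists2 z, X z & ple x z /\ ple y z)
    & (forall x y, X x -> Gp y -> ple y x -> X y)].

(* countably generated: has a countable cofinal subset
   (a nonempty countable set is the range of a sequence) *)
Definition ctbly_generated_interval (X : set G) : Prop :=
  interval X /\
  exists f : nat -> G, (forall n, X (f n)) /\ (forall x, X x -> exists n, ple x (f n)).

Definition int_add (X Y : set G) : set G :=
  [set z | Gp z /\ exists x y, [/\ X x, Y y & ple z (x + y)]].

Fixpoint int_mul (t : nat) (X : set G) : set G :=
  match t with
  | O => [set 0]
  | S t' => int_add X (int_mul t' X)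
  end.

End PO.

From Pilot Require Import Defs.
From mathcomp Require Import all_boot all_algebra.
From mathcomp Require Import boolp classical_sets.
Set Implicit Arguments. Unset Strict Implicit. Unset Printing Implicit Defensive.
Import GRing.Theory.
Local Open Scope ring_scope.
Local Open Scope classical_set_scope.

(* Build X i by dependent choice, starting from X 0 = D 0 and keeping
   X i ⊆ D i, so that t X i ⊆ t D i <> G^+ comes for free.  Given X with
   Q X = G^+ and an interval D with q D = G^+, pick an increasing cofinal chain
   (x n) of X and grow an increasing chain (y n) in D whose increments are
   bounded by increments of a subsequence (x (K n)) and satisfy
   Q x n <= (Q q) (y (n+1) - y n).  Then X' := ↓(y n) and Y := ↓(x (K n) - y n)
   satisfy X' + Y = X and (Q q) X' = G^+.  Each increment comes from the Riesz
   property: if z <= Q e and z <= q d, then z <= (Q q) p for some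
   0 <= p <= e, d, by decomposing z and interpolating between the pieces. *)

Lemma dependent_choice (A : Type) (P : nat -> A -> Prop)
    (R : nat -> A -> A -> Prop) (a0 : A) :
  P 0%N a0 -> (forall n a, P n a -> exists2 b, P n.+1 b & R n a b) ->
  exists f : nat -> A, forall n, P n (f n) /\ R n (f n) (f n.+1).
Proof.
move=> P0 stepP.
have /choice[g gP] : forall na : nat * A,
    exists b, P na.1 na.2 -> P na.1.+1 b /\ R na.1 na.2 b.
  move=> [n a] /=; have [/stepP[b Pb Rb]|nPa] := pselect (P n a).
    by exists b => _; split.
  by exists a => /nPa.
pose f := fix f n := if n is n'.+1 then g (n', f n') else a0.
have fP n : P n (f n) by elim: n => // n /(gP (n, f n))[].
by exists f => n; split; [|exact: (gP (n, f n) (fP n)).2].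
Qed.

Lemma subrACA (G : zmodType) (a b c d : G) : (a - b) - (c - d) = (a - c) - (b - d).
Proof. by rewrite !opprB addrACA [RHS]addrACA [- b - c]addrC. Qed.

Section PositiveCone.
Variables (G : zmodType) (Gp : set G).

Lemma ple0 x : ple Gp 0 x = Gp x.
Proof. by rewrite /ple subr0. Qed.

Lemma ple_addr x y : Gp y -> ple Gp x (x + y).
Proof. by rewrite /ple addrAC subrr add0r. Qed.

Lemma ple_addl x y : Gp y -> ple Gp x (y + x).
Proof. by rewrite addrC; apply: ple_addr. Qed.

Lemma ple_subr x y z : ple Gp x (y - z) = ple Gp (z + x) y.
Proof. by rewrite /ple opprD addrA. Qed.

Hypothesis hpo : po_group Gp.

Lemma Gp0 : Gp 0.
Proof. by case: hpo. Qed.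

Lemma GpD x y : Gp x -> Gp y -> Gp (x + y).
Proof. by case: hpo => _ + _; apply. Qed.

Lemma GpMn x n : Gp x -> Gp (x *+ n).
Proof.
move=> Gpx; elim: n => [|n IHn]; first by rewrite mulr0n; apply: Gp0.
by rewrite mulrS; apply: GpD.
Qed.

Lemma ple_refl x : ple Gp x x.
Proof. by rewrite /ple subrr; apply: Gp0. Qed.

Lemma ple_trans y x z : ple Gp x y -> ple Gp y z -> ple Gp x z.
Proof. by rewrite /ple => xy yz; rewrite -(subrK y z) -addrA; apply: GpD. Qed.

Lemma ple_antisym x y : ple Gp x y -> ple Gp y x -> x = y.
Proof.
case: hpo => _ _ Gp_anti; rewrite /ple => xy yx.
by apply/eqP; rewrite eq_sym -subr_eq0; apply/eqP/Gp_anti; rewrite ?opprB.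
Qed.

Lemma pleD x1 y1 x2 y2 :
  ple Gp x1 y1 -> ple Gp x2 y2 -> ple Gp (x1 + x2) (y1 + y2).
Proof. by rewrite /ple opprD addrACA; apply: GpD. Qed.

Lemma pleMn x y n : ple Gp x y -> ple Gp (x *+ n) (y *+ n).
Proof. by rewrite /ple -mulrnBl; apply: GpMn. Qed.

Lemma ple_chain (s : nat -> G) :
  (forall n, ple Gp (s n) (s n.+1)) -> {homo s : m n / (m <= n)%N >-> ple Gp m n}.
Proof. by apply: homo_leq; [exact: ple_refl | exact: ple_trans]. Qed.

End PositiveCone.

Section Intervals.
Variables (G : zmodType) (Gp : set G).
Hypothesis hpo : po_group Gp.

Lemma interval0 X : Defs.interval Gp X -> X 0.
Proof.
case=> X_Gp [x Xx] _ X_hered.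
by apply: (X_hered x) => //; [apply: (Gp0 hpo) | rewrite ple0; apply: X_Gp].
Qed.

Lemma int_mul_sub t X : int_mul Gp t X `<=` Gp.
Proof. by case: t => [z /= ->|t z []//]; apply: (Gp0 hpo). Qed.

Lemma int_mul_subset t X Y : X `<=` Y -> int_mul Gp t X `<=` int_mul Gp t Y.
Proof.
move=> XY; elim: t => [|t IHt] z //= [Gpz [x [y [Xx ty zxy]]]].
by split=> //; exists x, y; split; [apply: XY | apply: IHt |].
Qed.

Lemma int_mulP X t z : Defs.interval Gp X ->
  int_mul Gp t X z <-> Gp z /\ exists2 d, X d & ple Gp z (d *+ t).
Proof.
case=> X_Gp [x0 Xx0] X_dir _; split.
  elim: t z => [z /= ->|t IHt z /= [Gpz [x [y [Xx /IHt[_ [d Xd yd] zxy]]]]]].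
    by split; [apply: (Gp0 hpo) | exists x0; rewrite // mulr0n; apply: (ple_refl hpo)].
  split=> //; have [d' Xd' [xd' dd']] := X_dir _ _ Xx Xd.
  exists d' => //; rewrite mulrS; apply: (ple_trans hpo zxy).
  by apply: (pleD hpo xd'); apply: (ple_trans hpo yd); apply: (pleMn hpo).
case=> + [d Xd]; elim: t z => [z /= Gpz|t IHt z Gpz zd].
  by rewrite mulr0n => z0; apply: (ple_antisym hpo) => //; rewrite ple0.
split=> //=; exists d, (d *+ t); split; rewrite -?mulrS //.
by apply: IHt; [apply: (GpMn hpo); apply: X_Gp | apply: (ple_refl hpo)].
Qed.

End Intervals.

Section Chains.
Variables (G : zmodType) (Gp : set G).
Hypothesis hpo : po_group Gp.

Definition downset (s : nat -> G) : set G :=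
  [set z | Gp z /\ exists n, ple Gp z (s n)].

Lemma downset_cofinal X s : Defs.interval Gp X -> (forall n, X (s n)) ->
  (forall z, X z -> exists n, ple Gp z (s n)) -> downset s = X.
Proof.
case=> X_Gp _ _ X_hered Xs s_cofinal; apply/seteqP; split.
  by move=> z [Gpz [n zs]]; apply: X_hered (Xs n) Gpz zs.
by move=> z Xz; split; [apply: X_Gp | apply: s_cofinal].
Qed.

Section Chain.
Variable s : nat -> G.
Hypotheses (s_ge0 : forall n, Gp (s n)) (s_incr : forall n, ple Gp (s n) (s n.+1)).

Lemma downset_chain n : downset s (s n).
Proof. by split=> //; exists n; apply: (ple_refl hpo). Qed.

Lemma ctbly_generated_interval_downset : ctbly_generated_interval Gp (downset s).
Proof.
have s_homo := ple_chain hpo s_incr.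
split; last by exists s; split=> [|z [_ //]]; apply: downset_chain.
split=> [z [] // | | x y [_ [m xs]] [_ [n ys]] | x y [_ [n xs]] Gpy yx].
- by exists (s 0%N); apply: downset_chain.
- exists (s (maxn m n)); first exact: downset_chain.
  by split; [apply: (ple_trans hpo xs) | apply: (ple_trans hpo ys)];
    apply: s_homo; rewrite ?leq_maxl ?leq_maxr.
- by split=> //; exists n; apply: (ple_trans hpo yx).
Qed.

Lemma downset_add t : (forall n, Gp (t n)) -> (forall n, ple Gp (t n) (t n.+1)) ->
  int_add Gp (downset s) (downset t) = downset (fun n => s n + t n).
Proof.
move=> t_ge0 t_incr; have s_homo := ple_chain hpo s_incr.
have t_homo := ple_chain hpo t_incr.
apply/seteqP; split=> [z [Gpz [x [y [[_ [m xs]] [_ [n yt]] zxy]]]] | z [Gpz [n zst]]].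
  split=> //; exists (maxn m n); apply: (ple_trans hpo zxy); apply: (pleD hpo).
    by apply: (ple_trans hpo xs); apply: s_homo; rewrite leq_maxl.
  by apply: (ple_trans hpo yt); apply: t_homo; rewrite leq_maxr.
split=> //; exists (s n), (t n); split=> //; first exact: downset_chain.
by split=> //; exists n; apply: (ple_refl hpo).
Qed.

End Chain.

Lemma cofinal_chain X : ctbly_generated_interval Gp X ->
  exists x : nat -> G, [/\ forall n, X (x n), forall n, ple Gp (x n) (x n.+1)
    & forall z, X z -> exists n, ple Gp z (x n)].
Proof.
case=> -[_ _ X_dir _] [f [Xf f_cofinal]].
have [x xP] : exists x : nat -> G,
    forall n, (X (x n) /\ ple Gp (f n) (x n)) /\ ple Gp (x n) (x n.+1).
  apply: (@dependent_choice _ (fun n a => X a /\ ple Gp (f n) a) (fun=> ple Gp)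
    (f 0%N)); first by split; [|apply: (ple_refl hpo)].
  move=> n a [Xa _]; have [b Xb [ab fb]] := X_dir _ _ Xa (Xf n.+1).
  by exists b.
exists x; split=> [n | n | z /f_cofinal[n zf]]; try by case: (xP n) => -[].
by exists n; apply: (ple_trans hpo zf); case: (xP n) => -[].
Qed.

End Chains.

Section Riesz.
Variables (G : zmodType) (Gp : set G).
Hypotheses (hpo : po_group Gp) (hriesz : riesz Gp).

Lemma interpolation a1 a2 b1 b2 :
  ple Gp a1 b1 -> ple Gp a1 b2 -> ple Gp a2 b1 -> ple Gp a2 b2 ->
  exists c, [/\ ple Gp a1 c, ple Gp a2 c, ple Gp c b1 & ple Gp c b2].
Proof.
move=> a1b1 a1b2 a2b1 a2b2.
have split_b1a1 : ple Gp (b1 - a1) ((b1 - a2) + (b2 - a1)).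
  by rewrite /ple opprB -addrA [X in _ + X]addrA subrK addrC addrA subrK.
have [u1 [u2 [Gpu1 Gpu2 b1a1E u1b1a2 u2b2a1]]] :=
  hriesz a1b1 a2b1 a1b2 split_b1a1.
have cE : a1 + u2 = b1 - u1.
  by apply/eqP; rewrite eq_sym subr_eq -addrA [u2 + u1]addrC -b1a1E subrKC.
exists (a1 + u2); split.
- exact: ple_addr Gpu2.
- by rewrite cE ple_subr addrC -ple_subr.
- by rewrite cE /ple opprB addrC subrK.
- by rewrite -ple_subr.
Qed.

Lemma lower_bound_mulrn e d n z : Gp d -> Gp z ->
  ple Gp z e -> ple Gp z (d *+ n) ->
  exists p, [/\ Gp p, ple Gp p e, ple Gp p d & ple Gp z (p *+ n)].
Proof.
move=> Gpd; elim: n z => [|n IHn] z Gpz ze.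
  rewrite mulr0n => z0; exists 0; rewrite mulr0n !ple0.
  split=> //; first exact: (Gp0 hpo).
  by rewrite -ple0; apply: (ple_trans hpo _ ze); rewrite ple0.
rewrite mulrS => zdn.
have [a [b [Gpa Gpb zE ad bdn]]] := hriesz Gpz Gpd (GpMn hpo n Gpd) zdn.
have bz : ple Gp b z by rewrite zE; apply: ple_addl.
have az : ple Gp a z by rewrite zE; apply: ple_addr.
have [pb [Gppb pbe pbd bpb]] := IHn b Gpb (ple_trans hpo bz ze) bdn.
have [c [ac pbc ce cd]] := interpolation (ple_trans hpo az ze) ad pbe pbd.
exists c; split=> //; first by rewrite -ple0; apply: (ple_trans hpo _ ac); rewrite ple0.
by rewrite zE mulrS; apply: (pleD hpo ac); apply: (ple_trans hpo bpb); apply: (pleMn hpo).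
Qed.

Lemma lower_bound_mulrnM e d m n z : Gp e -> Gp d -> Gp z ->
  ple Gp z (e *+ m) -> ple Gp z (d *+ n) ->
  exists p, [/\ Gp p, ple Gp p e, ple Gp p d & ple Gp z (p *+ (m * n)%N)].
Proof.
move=> Gpe Gpd; elim: m z => [|m IHm] z Gpz.
  rewrite mulr0n => z0 _; exists 0; rewrite mul0n mulr0n !ple0.
  by split=> //; apply: (Gp0 hpo).
rewrite mulrS => zem zdn.
have [z1 [z2 [Gpz1 Gpz2 zE z1e z2em]]] := hriesz Gpz Gpe (GpMn hpo m Gpe) zem.
have z1z : ple Gp z1 z by rewrite zE; apply: ple_addr.
have z2z : ple Gp z2 z by rewrite zE; apply: ple_addl.
have [p1 [_ p1e p1d z1p1]] :=
  lower_bound_mulrn Gpd Gpz1 z1e (ple_trans hpo z1z zdn).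
have [p2 [Gpp2 p2e p2d z2p2]] := IHm z2 Gpz2 z2em (ple_trans hpo z2z zdn).
have [c [p1c p2c ce cd]] := interpolation p1e p1d p2e p2d.
exists c; split=> //.
  by rewrite -ple0; apply: (ple_trans hpo _ p2c); rewrite ple0.
rewrite zE mulSn mulrnDr; apply: (pleD hpo).
  by apply: (ple_trans hpo z1p1); apply: (pleMn hpo).
by apply: (ple_trans hpo z2p2); apply: (pleMn hpo).
Qed.

End Riesz.

Section Refinement.
Variables (G : zmodType) (Gp : set G).
Hypotheses (hpo : po_group Gp) (hriesz : riesz Gp).
Variables (X D : set G) (Q q : nat) (x : nat -> G).
Hypotheses (X_interval : Defs.interval Gp X) (D_interval : Defs.interval Gp D).
Hypotheses (QX : int_mul Gp Q X = Gp) (qD : int_mul Gp q D = Gp).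
Hypotheses (Xx : forall n, X (x n)) (x_incr : forall n, ple Gp (x n) (x n.+1)).
Hypothesis x_cofinal : forall z, X z -> exists n, ple Gp z (x n).

Let X_Gp : X `<=` Gp. Proof. by case: X_interval. Qed.
Let D_Gp : D `<=` Gp. Proof. by case: D_interval. Qed.
Let x_homo := ple_chain hpo x_incr.

Lemma bounded_increment K y g : D y -> ple Gp y (x K) -> Gp g ->
  exists K' p, [/\ (K < K')%N, Gp p, ple Gp p (x K' - x K), D (y + p)
                 & ple Gp g (p *+ (Q * q)%N)].
Proof.
move=> Dy yxK Gpg; have [_ _ D_dir D_hered] := D_interval.
have /(int_mulP hpo _ _ D_interval)[_ [d0 Dd0 d0P]] : int_mul Gp q D (g + y *+ q).
  by rewrite qD; apply: (GpD hpo) => //; apply/(GpMn hpo)/D_Gp.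
have [d Dd [d0d yd]] := D_dir _ _ Dd0 Dy.
have gdy : ple Gp g ((d - y) *+ q).
  by rewrite mulrnBl ple_subr addrC; apply: (ple_trans hpo d0P); apply: (pleMn hpo).
have /(int_mulP hpo _ _ X_interval)[_ [x0 Xx0 x0P]] : int_mul Gp Q X (g + x K *+ Q).
  by rewrite QX; apply: (GpD hpo) => //; apply/(GpMn hpo)/X_Gp.
have [n0 x0n0] := x_cofinal Xx0.
pose K' := maxn n0 K.+1.
have gxK' : ple Gp g ((x K' - x K) *+ Q).
  rewrite mulrnBl ple_subr addrC; apply: (ple_trans hpo x0P); apply: (pleMn hpo).
  by apply: (ple_trans hpo x0n0); apply: x_homo; apply: leq_maxl.
have KK' : (K < K')%N by rewrite leq_max ltnSn orbT.
have [p [Gpp pxK' pdy gp]] :=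
  lower_bound_mulrnM hpo hriesz (x_homo (ltnW KK')) yd Gpg gxK' gdy.
exists K', p; split=> //.
by apply: D_hered Dd _ _; [apply: (GpD hpo); [apply: D_Gp|] | rewrite -ple_subr].
Qed.

Lemma dominated_chain : exists (K : nat -> nat) (y : nat -> G),
  [/\ forall n, D (y n) /\ ple Gp (y n) (x (K n)),
      forall n, (n <= K n)%N,
      forall n, ple Gp (y n) (y n.+1),
      forall n, ple Gp (y n.+1 - y n) (x (K n.+1) - x (K n))
    & forall n, ple Gp (x n *+ Q) ((y n.+1 - y n) *+ (Q * q)%N)].
Proof.
pose P n (Ky : nat * G) := [/\ D Ky.2, ple Gp Ky.2 (x Ky.1) & (n <= Ky.1)%N].
pose R n (Ky Ky' : nat * G) := [/\ ple Gp Ky.2 Ky'.2,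
  ple Gp (Ky'.2 - Ky.2) (x Ky'.1 - x Ky.1)
  & ple Gp (x n *+ Q) ((Ky'.2 - Ky.2) *+ (Q * q)%N)].
have [st stP] : exists st : nat -> nat * G, forall n, P n (st n) /\ R n (st n) (st n.+1).
  apply: (@dependent_choice _ P R (0%N, 0 : G)).
    by split=> //=; [apply: interval0 D_interval | rewrite ple0; apply: X_Gp].
  move=> n [K y] [/= Dy yxK nK].
  have [K' [p [KK' Gpp pxK' Dyp xnp]]] :=
    bounded_increment Dy yxK (GpMn hpo Q (X_Gp (Xx n))).
  exists (K', y + p).
    split=> /=; [done | | exact: leq_ltn_trans nK KK'].
    by rewrite -(subrKC (x K) (x K')); apply: (pleD hpo).
  by rewrite /R /= [y + p]addrC addrK; split=> //; apply: ple_addl.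
exists (fun n => (st n).1), (fun n => (st n).2).
by split=> n; have [[? ? ?] [? ? ?]] := stP n.
Qed.

Lemma refinement_along_chain : exists X' Y,
  [/\ ctbly_generated_interval Gp X', ctbly_generated_interval Gp Y,
      int_add Gp X' Y = X, X' `<=` D & int_mul Gp (Q * q)%N X' = Gp].
Proof.
have [K [y [yP nK y_incr y_dx x_dy]]] := dominated_chain.
have [_ _ _ D_hered] := D_interval.
have y_ge0 n : Gp (y n) by apply/D_Gp/(yP n).1.
pose r n := x (K n) - y n.
have r_incr n : ple Gp (r n) (r n.+1) by rewrite /ple subrACA; apply: y_dx.
have X'_interval := ctbly_generated_interval_downset hpo y_ge0 y_incr.
exists (downset Gp y), (downset Gp r); split=> //.
- by apply: ctbly_generated_interval_downset => // n; apply: (yP n).2.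
- rewrite downset_add //; last by move=> n; apply: (yP n).2.
  have -> : (fun n => y n + r n) = x \o K by apply: funext => n; rewrite /r subrKC.
  apply: downset_cofinal => [//|n|z /x_cofinal[m zxm]]; first exact: Xx.
  by exists m; apply: (ple_trans hpo zxm (x_homo (nK m))).
- by move=> z [Gpz [n zyn]]; apply: D_hered (yP n).1 Gpz zyn.
apply/seteqP; split=> [|z Gpz]; first exact: int_mul_sub.
apply/(int_mulP hpo _ _ X'_interval.1); split=> //.
have /(int_mulP hpo _ _ X_interval)[_ [x0 /x_cofinal[m x0xm] zx0]] : int_mul Gp Q X z.
  by rewrite QX.
exists (y m.+1); first exact: (downset_chain hpo y_ge0).
apply: (ple_trans hpo zx0); apply: (ple_trans hpo (pleMn hpo Q x0xm)).
apply: (ple_trans hpo (x_dy m)); apply: (pleMn hpo).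
by rewrite /ple subKr.
Qed.

End Refinement.

Lemma refine_interval (G : zmodType) (Gp : set G) (X D : set G) (Q q : nat) :
  po_group Gp -> riesz Gp ->
  ctbly_generated_interval Gp X -> int_mul Gp Q X = Gp ->
  Defs.interval Gp D -> int_mul Gp q D = Gp ->
  exists X' Y,
    [/\ ctbly_generated_interval Gp X', ctbly_generated_interval Gp Y,
        int_add Gp X' Y = X, X' `<=` D & int_mul Gp (Q * q)%N X' = Gp].
Proof.
move=> hpo hriesz ctblyX QX D_interval qD.
have [x [Xx x_incr x_cofinal]] := cofinal_chain hpo ctblyX.
exact: (refinement_along_chain hpo hriesz ctblyX.1 D_interval QX qD Xx x_incr x_cofinal).
Qed.

Local Close Scope ring_scope.

Theorem proposition3p5 (G : zmodType) (Gp : set G)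
  (hpo : po_group Gp) (hsimple : simple_po Gp) (hriesz : riesz Gp)
  (q : nat -> nat)
  (hinc : forall i j, (i < j)%N -> (q i < q j)%N)
  (hcop : forall i j, i <> j -> gcdn (q i) (q j) = 1%N)
  (D : nat -> set G)
  (hD : forall i, ctbly_generated_interval Gp (D i))
  (hDt : forall i t, (0 < t)%N -> (t <= (q i).-1)%N -> int_mul Gp t (D i) <> Gp)
  (hDq : forall i, int_mul Gp (q i) (D i) = Gp) :
  exists X : nat -> set G,
    [/\ (forall i, ctbly_generated_interval Gp (X i)),
        (forall i, exists Y : set G,
            ctbly_generated_interval Gp Y /\ int_add Gp (X i.+1) Y = X i),
        (forall i t, (0 < t)%N -> (t <= (q i).-1)%N -> int_mul Gp t (X i) <> Gp)
      & (forall i, int_mul Gp (\prod_(j < i.+1) q j)%N (X i) = Gp)].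
Proof.
pose P i (Xi : set G) := [/\ ctbly_generated_interval Gp Xi,
  int_mul Gp (\prod_(j < i.+1) q j)%N Xi = Gp & Xi `<=` D i].
pose R (_ : nat) (Xi Xi' : set G) :=
  exists Y, ctbly_generated_interval Gp Y /\ int_add Gp Xi' Y = Xi.
have [X XP] : exists X : nat -> set G, forall i, P i (X i) /\ R i (X i) (X i.+1).
  apply: (@dependent_choice _ P R (D 0%N)); first by split; rewrite ?big_ord1.
  move=> i Xi [ctblyXi XiE _].
  have [X' [Y [ctblyX' ctblyY X'YE X'D X'E]]] :=
    refine_interval hpo hriesz ctblyXi XiE (hD i.+1).1 (hDq i.+1).
  exists X'; last by exists Y.
  by split=> //; rewrite big_ord_recr.
exists X; split=> [i | i | i t t_gt0 t_le | i]; try by case: (XP i) => -[].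
move=> tXi; apply: (hDt i t t_gt0 t_le); apply/seteqP; split.
  exact: int_mul_sub.
by rewrite -{1}tXi; apply: int_mul_subset; case: (XP i) => -[].
Qed.
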